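(* Assume the field with involution $(\mathbb{F},\sigma)$ satisfies: there exist $a,b\in\mathbb{F}$ with $\bar aa+\bar bb=-1$. Let $E=(E,q)$ be a non-degenerate formed space. Then the stable group $\operatorname{colim}_n G(E^{\oplus n})$ does not depend on the choice of $E$, up to group isomorphism.
   Context: Write $\bar c=\sigma(c)$; fix $\varepsilon$ with $\varepsilon\bar\varepsilon=1$ and $\Lambda$ with $\{c-\varepsilon\bar c\}\le\Lambda\le\{c:c+\varepsilon\bar c=0\}$. A form on a finite-dimensional $E$ is a sesquilinear map ($f(av,bw)=\bar af(v,w)b$) modulo those $f$ with $f(v,v)\in\Lambda$, $f(w,v)=-\varepsilon\overline{f(v,w)}$. Non-degenerate means $\{v:\omega_q(w,v)=0\ \forall w\}=0$ with $\omega_q(v,w)=q(v,w)+\varepsilon\overline{q(w,v)}$. $G(E)$ is the group of bijective linear maps $g$ with $q(g(-),g(-))=q$ as forms; $E^{\oplus n}$ has the direct sum form, and the colimit is along the maps $G(E^{\oplus n})\to G(E^{\oplus n+1})$ extending by the identity on the added summand. *)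

From HB Require Import structures.
From mathcomp Require Import all_boot all_order all_algebra.
Set Implicit Arguments. Unset Strict Implicit. Unset Printing Implicit Defensive.
Import Order.TTheory GRing.Theory Num.Theory.
Local Open Scope ring_scope.

Section Forms.
Variables (F : fieldType) (sig : F -> F) (eps : F) (Lam : {pred F}).

Definition sesqui_map (V : lmodType F) (f : V -> V -> F) : Prop :=
  (forall a u v w, f (a *: u + v) w = sig a * f u w + f v w) /\
  (forall b u v w, f u (b *: v + w) = f u v * b + f u w).

(* the subgroup of sesqui_map maps that represent the zero form *)
Definition null_form (V : lmodType F) (f : V -> V -> F) : Prop :=
  (forall v, f v v \in Lam) /\ (forall v w, f w v = - (eps * sig (f v w))).

Definition form_eq (V : lmodType F) (f g : V -> V -> F) : Prop :=
  null_form (fun v w => f v w - g v w).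

Definition omega (V : lmodType F) (q : V -> V -> F) (v w : V) : F :=
  q v w + eps * sig (q w v).

Definition nondeg_form (V : lmodType F) (q : V -> V -> F) : Prop :=
  forall v : V, (forall w, omega q w v = 0) -> v = 0.

Variables (V : vectType F) (q : V -> V -> F).

Definition dsum_form (n : nat) (v w : {ffun 'I_n -> V}) : F :=
  \sum_(i < n) q (v i) (w i).

Definition is_linear (U : lmodType F) (g : U -> U) : Prop :=
  forall a u v, g (a *: u + v) = a *: g u + g v.

Definition inG (n : nat) (g : {ffun 'I_n -> V} -> {ffun 'I_n -> V}) : Prop :=
  is_linear g /\ bijective g /\
  form_eq (fun v w => dsum_form (g v) (g w)) (@dsum_form n).

Definition restr (m n : nat) (v : {ffun 'I_m -> V}) : {ffun 'I_n -> V} :=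
  [ffun j : 'I_n => (match (insub (val j) : option 'I_m) with
                    | Some k => v k | None => 0 end : V)].

Definition ext (n m : nat) (g : {ffun 'I_n -> V} -> {ffun 'I_n -> V})
  (v : {ffun 'I_m -> V}) : {ffun 'I_m -> V} :=
  [ffun i : 'I_m => (match (insub (val i) : option 'I_n) with
                    | Some j => g (restr n v) j | None => v i end : V)].

(* representatives of elements of colim_n G(E^{(+)n}) *)
Record stab_rep := StabRep {
  level : nat;
  smap : {ffun 'I_level -> V} -> {ffun 'I_level -> V};
  smapP : inG smap }.

Definition stab_equiv (x y : stab_rep) : Prop :=
  let k := maxn (level x) (level y) in
  forall v : {ffun 'I_k -> V}, ext (@smap x) v = ext (@smap y) v.

Definition stab_mul (x y z : stab_rep) : Prop :=
  let k := maxn (level x) (maxn (level y) (level z)) in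
  forall v : {ffun 'I_k -> V}, ext (@smap z) v = ext (@smap x) (ext (@smap y) v).

End Forms.

(* a group isomorphism between the colimit groups, given on representatives:
   well defined and injective on classes, surjective, multiplicative *)
Definition stab_iso (F : fieldType) (sig : F -> F) (eps : F) (Lam : {pred F})
  (V1 V2 : vectType F) (q1 : V1 -> V1 -> F) (q2 : V2 -> V2 -> F)
  (phi : stab_rep sig eps Lam q1 -> stab_rep sig eps Lam q2) : Prop :=
  (forall x y, stab_equiv x y <-> stab_equiv (phi x) (phi y)) /\
  (forall y, exists x, stab_equiv (phi x) y) /\
  (forall x y z, stab_mul x y z -> stab_mul (phi x) (phi y) (phi z)).

From HB Require Import structures.
From mathcomp Require Import all_boot all_order all_algebra.
From mathcomp Require Import zify ring.
Import GRing.Theory.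

(* Write -E for (E, -q).  When a^* a + b^* b = -1, the map (u, w) |-> (a u - b^* w, b u + a^* w)
   is an isometry E + E ~ -(E + E), so E^(4m) ~ E^(2m) + -E^(2m).  For non-degenerate W,
   the space W + -W is hyperbolic of rank dim W: it is isometric to W x W with the form
   omega(x1, y2), and omega is a perfect pairing.  Taking m = dim E2 for E1 and m = dim E1
   for E2 gives E1^(4 dim E2) ~ E2^(4 dim E1).  Finally, an isometry T : E1^A ~ E2^B with
   A, B > 0 induces an isomorphism of stable groups: g in G(E1^n) is extended by the identity
   to E1^(An) and conjugated by the blockwise isometry T^(+n) : E1^(An) ~ E2^(Bn). *)

Set Implicit Arguments. Unset Strict Implicit. Unset Printing Implicit Defensive.
Local Open Scope ring_scope.

Section Coordinates.
Variable F : fieldType.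

Section Entries.
Variable V : vectType F.

(* Junk value [0] outside ['I_m]. *)
Definition entry m (u : {ffun 'I_m -> V}) (i : nat) : V :=
  if (insub i : option 'I_m) is Some k then u k else 0.

Definition ffun_nat (G : nat -> V) m : {ffun 'I_m -> V} := [ffun k : 'I_m => G k].

Lemma entryE m (u : {ffun 'I_m -> V}) (k : 'I_m) : entry u k = u k.
Proof. by rewrite /entry valK. Qed.

Lemma entry_lt m (u : {ffun 'I_m -> V}) i (lt_im : (i < m)%N) : entry u i = u (Ordinal lt_im).
Proof. by rewrite /entry insubT. Qed.

Lemma entry_ge m (u : {ffun 'I_m -> V}) i : (m <= i)%N -> entry u i = 0.
Proof. by move=> le_mi; rewrite /entry insubN // -leqNgt. Qed.

Lemma entry_inj m (u w : {ffun 'I_m -> V}) :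
  (forall i, (i < m)%N -> entry u i = entry w i) -> u = w.
Proof. by move=> uw; apply/ffunP=> k; rewrite -!entryE uw. Qed.

Lemma entry_ffun_nat G m i : entry (ffun_nat G m) i = if (i < m)%N then G i else 0.
Proof. by case: ltnP => im; [rewrite entry_lt ffunE | rewrite entry_ge]. Qed.

Lemma entry_linear m a (u w : {ffun 'I_m -> V}) i :
  entry (a *: u + w) i = a *: entry u i + entry w i.
Proof.
case: (ltnP i m) => im; first by rewrite !(entry_lt _ im) !ffunE.
by rewrite !entry_ge // scaler0 addr0.
Qed.

Lemma entry_restr m n (v : {ffun 'I_m -> V}) i :
  entry (restr n v) i = if (i < n)%N then entry v i else 0.
Proof. by case: ltnP => ni; [rewrite (entry_lt _ ni) ffunE | rewrite entry_ge]. Qed.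

Lemma entry_ext n m (g : {ffun 'I_n -> V} -> {ffun 'I_n -> V}) (v : {ffun 'I_m -> V}) i :
  entry (ext g v) i =
  if (i < m)%N then (if (i < n)%N then entry (g (restr n v)) i else entry v i) else 0.
Proof.
case: (ltnP i m) => im; last by rewrite entry_ge.
rewrite (entry_lt _ im) ffunE /=; case: ltnP => ni.
  by rewrite insubT /= -(entryE (g _)).
by rewrite insubN -?leqNgt // (entry_lt _ im).
Qed.

Lemma restr_id n (v : {ffun 'I_n -> V}) : restr n v = v.
Proof. by apply: entry_inj => i ni; rewrite entry_restr ni. Qed.

Lemma restr_restr n k m (u : {ffun 'I_m -> V}) : (n <= k)%N ->
  restr n (restr k u) = restr n u.
Proof.
by move=> nk; apply: entry_inj => i ni; rewrite !entry_restr ni (leq_trans ni nk).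
Qed.

Lemma restrK k m : (k <= m)%N -> cancel (@restr F V k m) (@restr F V m k).
Proof. by move=> km u; rewrite restr_restr // restr_id. Qed.

Lemma restr_linear m n a (u w : {ffun 'I_m -> V}) :
  restr n (a *: u + w) = a *: restr n u + restr n w.
Proof. by apply: entry_inj => i ni; rewrite entry_linear !entry_restr ni entry_linear. Qed.

Section Extension.
Variables (n m : nat) (g : {ffun 'I_n -> V} -> {ffun 'I_n -> V}).

Lemma eq_ext (g' : {ffun 'I_n -> V} -> {ffun 'I_n -> V}) (v : {ffun 'I_m -> V}) :
  g =1 g' -> ext g v = ext g' v.
Proof. by move=> gg'; apply: entry_inj => i im; rewrite !entry_ext gg'. Qed.

Lemma ext_idfun (v : {ffun 'I_m -> V}) : g =1 id -> ext g v = v.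
Proof.
by move=> gid; apply: entry_inj => i im; rewrite entry_ext im gid entry_restr; case: ltnP.
Qed.

Lemma ext_ext k (v : {ffun 'I_m -> V}) : (n <= k)%N ->
  ext (ext g : {ffun 'I_k -> V} -> _) v = ext g v.
Proof.
move=> nk; apply: entry_inj => i im; rewrite !entry_ext im.
case: (ltnP i k) => ik; first by rewrite restr_restr // entry_restr ik.
by rewrite ltnNge (leq_trans nk ik).
Qed.

Lemma restr_ext (v : {ffun 'I_m -> V}) : (n <= m)%N -> restr n (ext g v) = g (restr n v).
Proof.
by move=> nm; apply: entry_inj => i ni; rewrite entry_restr ni entry_ext ni (leq_trans ni nm).
Qed.

Lemma ext_restr k (u : {ffun 'I_k -> V}) : (n <= k)%N -> (k <= m)%N ->
  ext g (restr m u) = restr m (ext g u).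
Proof.
move=> nk km; apply: entry_inj => i im; rewrite entry_ext im [RHS]entry_restr im entry_ext.
rewrite restr_restr ?(leq_trans nk km) //.
case: (ltnP i k) => ik; last by rewrite ltnNge (leq_trans nk ik) /= entry_restr im entry_ge.
by rewrite entry_restr im.
Qed.

Lemma ext_linear : linear g -> linear (ext g : {ffun 'I_m -> V} -> _).
Proof.
move=> lin_g a u v; apply: entry_inj => i im.
rewrite entry_linear !entry_ext im restr_linear lin_g.
by case: ltnP; rewrite ?entry_linear.
Qed.

End Extension.

Lemma ext_comp n m (g h : {ffun 'I_n -> V} -> {ffun 'I_n -> V}) (v : {ffun 'I_m -> V}) :
  (n <= m)%N -> ext (g \o h) v = ext g (ext h v).
Proof.
move=> nm; apply: entry_inj => i im; rewrite !entry_ext im /= restr_ext //.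
by case: ltnP => // ni; rewrite entry_ext im ltnNge ni.
Qed.

Lemma eq_ext_level nx ny k m (gx : {ffun 'I_nx -> V} -> _) (gy : {ffun 'I_ny -> V} -> _) :
  (nx <= k)%N -> (ny <= k)%N -> (k <= m)%N ->
  (forall u : {ffun 'I_k -> V}, ext gx u = ext gy u) <->
  (forall v : {ffun 'I_m -> V}, ext gx v = ext gy v).
Proof.
move=> xk yk km; split=> gxy.
  by move=> v; rewrite -(ext_ext gx v xk) -(ext_ext gy v yk); apply: eq_ext.
move=> u; rewrite -[ext gx u](restrK km) -[ext gy u](restrK km).
by rewrite -(ext_restr gx u xk km) -(ext_restr gy u yk km) gxy.
Qed.

Lemma eq_ext_mul_level nx ny nz k m (gx : {ffun 'I_nx -> V} -> _)
    (gy : {ffun 'I_ny -> V} -> _) (gz : {ffun 'I_nz -> V} -> _) :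
  (nx <= k)%N -> (ny <= k)%N -> (nz <= k)%N -> (k <= m)%N ->
  (forall u : {ffun 'I_k -> V}, ext gz u = ext gx (ext gy u)) <->
  (forall v : {ffun 'I_m -> V}, ext gz v = ext gx (ext gy v)).
Proof.
move=> xk yk zk km; split=> gxyz.
  move=> v; rewrite -(ext_ext gx _ xk) -(ext_ext gy v yk) -(ext_ext gz v zk) -ext_comp //.
  exact: eq_ext.
move=> u; rewrite -[ext gz u](restrK km) -[ext gx _](restrK km).
by rewrite -(ext_restr gz u zk km) -(ext_restr gx _ xk km) -(ext_restr gy u yk km) gxyz.
Qed.

End Entries.

Section Blocks.
Implicit Types (V : vectType F) (A B j k m n : nat).

(* [V^(A * k)] is read as [(V^A)^k]; [block A j] is the [j]-th component. *)
Definition block V A j m (u : {ffun 'I_m -> V}) : {ffun 'I_A -> V} :=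
  ffun_nat (fun s => entry u (j * A + s)) A.

Definition blockwise V1 V2 A B (f : {ffun 'I_A -> V1} -> {ffun 'I_B -> V2}) k
    (u : {ffun 'I_(A * k) -> V1}) : {ffun 'I_(B * k) -> V2} :=
  ffun_nat (fun i => entry (f (block A (i %/ B) u)) (i %% B)) (B * k).
Arguments blockwise {V1 V2 A B} f k u.

Lemma entry_block V A j m (u : {ffun 'I_m -> V}) s : (s < A)%N ->
  entry (block A j u) s = entry u (j * A + s).
Proof. by move=> sA; rewrite entry_ffun_nat sA. Qed.

Lemma block_inj V A k (u w : {ffun 'I_(A * k) -> V}) :
  (forall j, (j < k)%N -> block A j u = block A j w) -> u = w.
Proof.
move=> uw; apply: entry_inj => i ik.
have A_gt0 : (0 < A)%N by case: A u w uw ik => //; rewrite mul0n.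
have jk : (i %/ A < k)%N by rewrite ltn_divLR // mulnC.
have sA : (i %% A < A)%N by rewrite ltn_pmod.
have := entry_block (i %/ A) u sA; have := entry_block (i %/ A) w sA.
by rewrite -divn_eq => <- <-; rewrite uw.
Qed.

Lemma block_blockwise V1 V2 A B f k (u : {ffun 'I_(A * k) -> V1}) j : (j < k)%N ->
  block B j (@blockwise V1 V2 A B f k u) = f (block A j u).
Proof.
move=> jk; apply: entry_inj => s sB; rewrite entry_block // entry_ffun_nat.
have -> : (j * B + s < B * k)%N by nia.
have -> : ((j * B + s) %/ B = j)%N by nia.
by rewrite modnMDl modn_small.
Qed.

Lemma block_linear V A j m a (u w : {ffun 'I_m -> V}) :
  block A j (a *: u + w) = a *: block A j u + block A j w.
Proof. by apply: entry_inj => s sA; rewrite entry_linear !entry_block // entry_linear. Qed.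

Lemma block_restr V A j m n (w : {ffun 'I_m -> V}) :
  (j.+1 * A <= n)%N -> block A j (restr n w) = block A j w.
Proof.
move=> jn; apply: entry_inj => s sA; rewrite !entry_block // entry_restr.
by have -> : (j * A + s < n)%N by nia.
Qed.

Lemma block_ext_low V A j n m (g : {ffun 'I_n -> V} -> _) (v : {ffun 'I_m -> V}) :
  (j.+1 * A <= n)%N -> (n <= m)%N -> block A j (ext g v) = block A j (g (restr n v)).
Proof.
move=> jn nm; apply: entry_inj => s sA; rewrite !entry_block // entry_ext.
have lt_n : (j * A + s < n)%N by nia.
by rewrite lt_n (leq_trans lt_n nm).
Qed.

Lemma block_ext_high V A j n m (g : {ffun 'I_n -> V} -> _) (v : {ffun 'I_m -> V}) :
  (n <= j * A)%N -> block A j (ext g v) = block A j v.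
Proof.
move=> nj; apply: entry_inj => s sA; rewrite !entry_block // entry_ext.
have -> : (j * A + s < n)%N = false by apply/negbTE; rewrite -leqNgt; nia.
by case: ltnP => // mi; rewrite entry_ge.
Qed.

Lemma blockwise_linear V1 V2 A B (f : {ffun 'I_A -> V1} -> {ffun 'I_B -> V2}) k :
  linear f -> linear (blockwise f k).
Proof.
move=> lin_f a u v; apply: block_inj => j jk.
by rewrite block_linear !block_blockwise // block_linear lin_f.
Qed.

Lemma blockwiseK V1 V2 A B (f : {ffun 'I_A -> V1} -> {ffun 'I_B -> V2}) f' k :
  cancel f f' -> cancel (blockwise f k) (blockwise f' k).
Proof. by move=> fK u; apply: block_inj => j jk; rewrite !block_blockwise. Qed.

Lemma dsum_entry V (q : V -> V -> F) m (u w : {ffun 'I_m -> V}) :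
  dsum_form q u w = \sum_(0 <= i < m) q (entry u i) (entry w i).
Proof. by rewrite big_mkord; apply: eq_bigr => i _; rewrite !entryE. Qed.

Lemma dsum_block V (q : V -> V -> F) A k (u w : {ffun 'I_(A * k) -> V}) :
  dsum_form q u w = \sum_(j < k) dsum_form q (block A j u) (block A j w).
Proof.
rewrite dsum_entry [in index_iota _ _]mulnC big_nat_mul big_mkord; apply: eq_bigr => j _.
rewrite dsum_entry -{1}[(j * A)%N]add0n big_addn mulSn addnK.
by apply: eq_big_nat => s /andP[_ sA]; rewrite !entry_block // addnC.
Qed.

End Blocks.

End Coordinates.
Arguments blockwise {F V1 V2 A B} f k u.

Section FormParameter.
Variables (F : fieldType) (sig : {rmorphism F -> F}) (eps : F) (Lam : {pred F}).
Hypothesis sig_invol : involutive sig.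
Hypothesis heps : eps * sig eps = 1.
Hypothesis Lam0 : 0 \in Lam.
Hypothesis LamB : forall x y, x \in Lam -> y \in Lam -> x - y \in Lam.
Hypothesis Lam_min : forall c : F, c - eps * sig c \in Lam.

Local Notation null := (null_form sig eps Lam).
Local Notation form_eq := (form_eq sig eps Lam).

Lemma LamN x : x \in Lam -> - x \in Lam.
Proof. by move=> Lx; rewrite -sub0r; apply: LamB. Qed.

Lemma LamD x y : x \in Lam -> y \in Lam -> x + y \in Lam.
Proof. by move=> Lx Ly; rewrite -[y]opprK; apply/LamB/LamN. Qed.

Section NullForms.
Variable U : lmodType F.
Implicit Types f g : U -> U -> F.

Lemma eq_null_form f g : null f -> f =2 g -> null g.
Proof. by move=> [fL fS] fg; split=> [v|v w]; rewrite -!fg. Qed.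

Lemma null_form0 : null (fun _ _ : U => 0).
Proof. by split=> // v w; rewrite rmorph0 mulr0 oppr0. Qed.

Lemma null_formD f g : null f -> null g -> null (fun v w => f v w + g v w).
Proof.
move=> [fL fS] [gL gS]; split=> [v|v w]; first exact: LamD.
by rewrite fS gS rmorphD mulrDr opprD.
Qed.

Lemma null_formN f : null f -> null (fun v w => - f v w).
Proof.
move=> [fL fS]; split=> [v|v w]; first exact: LamN.
by rewrite fS rmorphN mulrN.
Qed.

Lemma null_form_sum I (r : seq I) (f : I -> U -> U -> F) :
  (forall i, null (f i)) -> null (fun v w => \sum_(i <- r) f i v w).
Proof.
move=> nf; elim: r => [|i r IHr].
  by apply: (eq_null_form null_form0) => v w; rewrite big_nil.
by apply: (eq_null_form (null_formD (nf i) IHr)) => v w; rewrite big_cons.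
Qed.

Lemma null_form_eps_adjoint f : null (fun v w => f v w - eps * sig (f w v)).
Proof.
split=> [v|v w]; first exact: Lam_min.
by rewrite rmorphB rmorphM sig_invol mulrBr mulrA heps mul1r opprB addrC.
Qed.

End NullForms.

Lemma null_form_comp (U U' : lmodType F) (h : U' -> U) (f : U -> U -> F) :
  null f -> null (fun v w => f (h v) (h w)).
Proof. by move=> [fL fS]; split=> [v|v w]; [apply: fL | apply: fS]. Qed.

Lemma linear_can2 (U U' : lmodType F) (T : U -> U') (T' : U' -> U) :
  linear T -> cancel T T' -> cancel T' T -> linear T'.
Proof. by move=> linT TK T'K a u v; apply: (can_inj TK); rewrite linT !T'K. Qed.

Definition form_isometry (U U' : lmodType F) (f : U -> U -> F) (f' : U' -> U' -> F)
    (T : U -> U') (T' : U' -> U) :=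
  [/\ linear T, cancel T T', cancel T' T & form_eq (fun u w => f' (T u) (T w)) f].

Section Isometries.
Variables (U U' U'' : lmodType F).
Implicit Types (f : U -> U -> F) (g : U' -> U' -> F) (h : U'' -> U'' -> F).

Lemma exact_isometry f g (T : U -> U') T' :
  linear T -> cancel T T' -> cancel T' T -> (forall u w, g (T u) (T w) = f u w) ->
  form_isometry f g T T'.
Proof.
move=> linT TK T'K Tf; split=> //.
by apply: (eq_null_form (null_form0 U)) => v w; rewrite Tf subrr.
Qed.

Lemma isometry_sym f g (T : U -> U') T' : form_isometry f g T T' -> form_isometry g f T' T.
Proof.
move=> [linT TK T'K Tf]; split=> //; first exact: linear_can2 linT TK T'K.
by apply: (eq_null_form (null_form_comp T' (null_formN Tf))) => v w; rewrite !T'K opprB.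
Qed.

Lemma isometry_trans f g h (T : U -> U') T' (S : U' -> U'') S' :
  form_isometry f g T T' -> form_isometry g h S S' -> form_isometry f h (S \o T) (T' \o S').
Proof.
move=> [linT TK T'K Tf] [linS SK S'K Sf]; split.
- by move=> a u v /=; rewrite linT linS.
- by move=> u /=; rewrite SK TK.
- by move=> u /=; rewrite T'K S'K.
by apply: (eq_null_form (null_formD (null_form_comp T Sf) Tf)) => v w /=; rewrite addrA subrK.
Qed.

Lemma isometry_opp f g (T : U -> U') T' :
  form_isometry f g T T' -> form_isometry (fun u w => - f u w) (fun u w => - g u w) T T'.
Proof.
move=> [linT TK T'K Tf]; split=> //.
by apply: (eq_null_form (null_formN Tf)) => v w; rewrite opprD.
Qed.

End Isometries.

Lemma isometry_id (U : lmodType F) (f : U -> U -> F) : form_isometry f f id id.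
Proof. exact: exact_isometry. Qed.

Lemma pairZ (U1 U2 : lmodType F) a (u : U1) (v : U2) :
  a *: (u, v) = (a *: u, a *: v) :> U1 * U2.
Proof. by []. Qed.

Lemma pairD (U1 U2 : lmodType F) (u u' : U1) (v v' : U2) :
  (u, v) + (u', v') = (u + u', v + v') :> U1 * U2.
Proof. by []. Qed.

Definition pair_form (U1 U2 : lmodType F) (f1 : U1 -> U1 -> F) (f2 : U2 -> U2 -> F)
    (x y : U1 * U2) : F :=
  f1 x.1 y.1 + f2 x.2 y.2.

Lemma isometry_pair (U1 U2 U1' U2' : lmodType F) f1 f2 g1 g2
    (T1 : U1 -> U1') T1' (T2 : U2 -> U2') T2' :
  form_isometry f1 g1 T1 T1' -> form_isometry f2 g2 T2 T2' ->
  form_isometry (pair_form f1 f2) (pair_form g1 g2)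
    (fun z => (T1 z.1, T2 z.2)) (fun z => (T1' z.1, T2' z.2)).
Proof.
move=> [linT1 T1K T1'K T1f] [linT2 T2K T2'K T2f]; split.
- by move=> a u v; rewrite /= linT1 linT2.
- by case=> u1 u2; rewrite /= T1K T2K.
- by case=> u1 u2; rewrite /= T1'K T2'K.
apply: (eq_null_form (null_formD (null_form_comp fst T1f) (null_form_comp snd T2f))).
by move=> v w; rewrite /pair_form /=; ring.
Qed.

Definition isometric (U U' : lmodType F) (f : U -> U -> F) (g : U' -> U' -> F) :=
  exists T T', form_isometry f g T T'.

Lemma isometric_refl (U : lmodType F) (f : U -> U -> F) : isometric f f.
Proof. by exists id, id; apply: isometry_id. Qed.

Lemma isometric_sym (U U' : lmodType F) f (g : U' -> U' -> F) :
  isometric f g -> isometric g (f : U -> U -> F).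
Proof. by move=> [T [T' isoT]]; exists T', T; apply: isometry_sym. Qed.

Lemma isometric_trans (U U' U'' : lmodType F) f g (h : U'' -> U'' -> F) :
  isometric (f : U -> U -> F) (g : U' -> U' -> F) -> isometric g h -> isometric f h.
Proof.
by move=> [T [T' isoT]] [S [S' isoS]]; exists (S \o T), (T' \o S'); apply: isometry_trans isoS.
Qed.

Lemma isometric_opp (U U' : lmodType F) f (g : U' -> U' -> F) :
  isometric (f : U -> U -> F) g -> isometric (fun u w => - f u w) (fun u w => - g u w).
Proof. by move=> [T [T' isoT]]; exists T, T'; apply: isometry_opp. Qed.

Lemma isometric_pair (U1 U2 U1' U2' : lmodType F) f1 f2
    (g1 : U1' -> U1' -> F) (g2 : U2' -> U2' -> F) :
  isometric (f1 : U1 -> U1 -> F) g1 -> isometric (f2 : U2 -> U2 -> F) g2 ->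
  isometric (pair_form f1 f2) (pair_form g1 g2).
Proof.
by move=> [T1 [T1' iso1]] [T2 [T2' iso2]]; do 2!eexists; apply: isometry_pair iso1 iso2.
Qed.

Section Sesquilinear.
Variables (U : lmodType F) (Q : U -> U -> F).
Hypothesis sesqQ : sesqui_map sig Q.

Lemma sesqui0l w : Q 0 w = 0.
Proof.
by case: sesqQ => QZl _; have := QZl (-1) 0 0 w; rewrite scaleN1r addNr rmorphN1 mulN1r addNr.
Qed.

Lemma sesqui0r w : Q w 0 = 0.
Proof. by case: sesqQ => _ QZr; have := QZr (-1) w 0 0; rewrite scaleN1r addNr mulrN1 addNr. Qed.

Lemma sesquiZl a u w : Q (a *: u) w = sig a * Q u w.
Proof. by case: sesqQ => QZl _; rewrite -[a *: u]addr0 QZl sesqui0l addr0. Qed.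

Lemma sesquiZr a u w : Q w (a *: u) = Q w u * a.
Proof. by case: sesqQ => _ QZr; rewrite -[a *: u]addr0 QZr sesqui0r addr0. Qed.

Lemma sesquiDl u v w : Q (u + v) w = Q u w + Q v w.
Proof. by case: sesqQ => QZl _; rewrite -[u]scale1r QZl rmorph1 mul1r scale1r. Qed.

Lemma sesquiDr u v w : Q w (u + v) = Q w u + Q w v.
Proof. by case: sesqQ => _ QZr; rewrite -[u]scale1r QZr mulr1 scale1r. Qed.

Lemma sesquiNl u w : Q (- u) w = - Q u w.
Proof. by rewrite -scaleN1r sesquiZl rmorphN1 mulN1r. Qed.

Lemma sesquiNr u w : Q w (- u) = - Q w u.
Proof. by rewrite -scaleN1r sesquiZr mulrN1. Qed.

Lemma sesquiBl u v w : Q (u - v) w = Q u w - Q v w.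
Proof. by rewrite sesquiDl sesquiNl. Qed.

Lemma sesquiBr u v w : Q w (u - v) = Q w u - Q w v.
Proof. by rewrite sesquiDr sesquiNr. Qed.

Lemma sesqui_suml I (r : seq I) (c : I -> F) (x : I -> U) w :
  Q (\sum_(i <- r) c i *: x i) w = \sum_(i <- r) sig (c i) * Q (x i) w.
Proof.
elim/big_rec2: _ => [|i y1 y2 _ <-]; first exact: sesqui0l.
by rewrite sesquiDl sesquiZl.
Qed.

Lemma sesqui_sumr I (r : seq I) (c : I -> F) (x : I -> U) w :
  Q w (\sum_(i <- r) c i *: x i) = \sum_(i <- r) Q w (x i) * c i.
Proof.
elim/big_rec2: _ => [|i y1 y2 _ <-]; first exact: sesqui0r.
by rewrite sesquiDr sesquiZr.
Qed.

End Sesquilinear.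

Section Quaternion.
Variables (U : lmodType F) (Q : U -> U -> F).
Hypothesis sesqQ : sesqui_map sig Q.
Variables (a b : F).
Hypothesis hab : sig a * a + sig b * b = -1.

Definition comb2 (c1 c2 : F) (z : U * U) : U := c1 *: z.1 + c2 *: z.2.

Lemma comb2_linear c1 c2 : linear (comb2 c1 c2).
Proof.
move=> c [u1 u2] [v1 v2]; rewrite /comb2 /= !scalerDr !scalerA.
by rewrite (mulrC c1) (mulrC c2) -!scalerA addrACA.
Qed.

Lemma comb2_comb2 c c' c1 c2 c3 c4 z :
  comb2 c c' (comb2 c1 c2 z, comb2 c3 c4 z) = comb2 (c * c1 + c' * c3) (c * c2 + c' * c4) z.
Proof. by rewrite /comb2 /= !scalerDr !scalerA !scalerDl addrACA. Qed.

Lemma comb2_fst z : comb2 1 0 z = z.1.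
Proof. by rewrite /comb2 scale1r scale0r addr0. Qed.

Lemma comb2_snd z : comb2 0 1 z = z.2.
Proof. by rewrite /comb2 scale1r scale0r add0r. Qed.

Lemma sesqui_comb2 c1 c2 c3 c4 z z' :
  Q (comb2 c1 c2 z) (comb2 c3 c4 z') =
  sig c1 * Q z.1 z'.1 * c3 + sig c1 * Q z.1 z'.2 * c4 +
  sig c2 * Q z.2 z'.1 * c3 + sig c2 * Q z.2 z'.2 * c4.
Proof.
by rewrite /comb2 !(sesquiDl sesqQ, sesquiDr sesqQ, sesquiZl sesqQ, sesquiZr sesqQ); ring.
Qed.

(* Left multiplication by [[a, -b^*], [b, a^*]], whose "norm" a^* a + b^* b is -1. *)
Definition quat_map (z : U * U) : U * U := (comb2 a (- sig b) z, comb2 b (sig a) z).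

Definition quat_map_inv (z : U * U) : U * U :=
  (comb2 (- sig a) (- sig b) z, comb2 b (- a) z).

Lemma quat_map_linear : linear quat_map.
Proof. by move=> c z z'; rewrite /quat_map !comb2_linear. Qed.

Lemma quat_mapK : cancel quat_map quat_map_inv.
Proof.
case=> u w; rewrite /quat_map_inv /quat_map !comb2_comb2.
have -> : - sig a * a + - sig b * b = 1 by rewrite -[1]opprK -hab; ring.
have -> : b * a + - a * b = 0 by ring.
have -> : - sig a * - sig b + - sig b * sig a = 0 by ring.
have -> : b * - sig b + - a * sig a = 1 by rewrite -[1]opprK -hab; ring.
by rewrite comb2_fst comb2_snd.
Qed.

Lemma quat_map_invK : cancel quat_map_inv quat_map.
Proof.
case=> u w; rewrite /quat_map_inv /quat_map !comb2_comb2.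
have -> : a * - sig a + - sig b * b = 1 by rewrite -[1]opprK -hab; ring.
have -> : b * - sig a + sig a * b = 0 by ring.
have -> : a * - sig b + - sig b * - a = 0 by ring.
have -> : b * - sig b + sig a * - a = 1 by rewrite -[1]opprK -hab; ring.
by rewrite comb2_fst comb2_snd.
Qed.

Lemma quat_isometry :
  form_isometry (pair_form Q Q) (fun z z' => - pair_form Q Q z z') quat_map quat_map_inv.
Proof.
apply: exact_isometry; [exact: quat_map_linear | exact: quat_mapK | exact: quat_map_invK |].
case=> [u w] [u' w']; rewrite /pair_form /quat_map /= !sesqui_comb2 !rmorphN !sig_invol /=.
transitivity (- (sig a * a + sig b * b) * (Q u u' + Q w w')); first ring.
by rewrite hab; ring.
Qed.

End Quaternion.

Section DirectSums.
Variables (V : vectType F) (q : V -> V -> F).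
Hypothesis sesq : sesqui_map sig q.
Local Notation dsum := (dsum_form q).

Lemma dsum_sesqui n : sesqui_map sig (@dsum n).
Proof.
case: sesq => qZl qZr; split=> [a u v w|b u v w];
  rewrite /dsum_form ?mulr_sumr ?mulr_suml -big_split /=;
  by apply: eq_bigr => i _; rewrite !ffunE ?qZl ?qZr.
Qed.

Lemma omega_dsum n (v w : {ffun 'I_n -> V}) :
  omega sig eps (@dsum n) v w = \sum_(i < n) omega sig eps q (v i) (w i).
Proof. by rewrite /omega /dsum_form rmorph_sum mulr_sumr -big_split. Qed.

Lemma dsum_nondeg n : nondeg_form sig eps q -> nondeg_form sig eps (@dsum n).
Proof.
move=> ndq v v_orth; apply/ffunP=> i; rewrite ffunE; apply: ndq => x.
have := v_orth [ffun j => if j == i then x else 0].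
rewrite omega_dsum (bigD1 i) //= ffunE eqxx big1 ?addr0 // => j ji.
by rewrite ffunE (negbTE ji) /omega (sesqui0l sesq) (sesqui0r sesq) rmorph0 mulr0 addr0.
Qed.

Definition dsum_split m n (v : {ffun 'I_(m + n) -> V}) :
    {ffun 'I_m -> V} * {ffun 'I_n -> V} :=
  ([ffun i => v (lshift n i)], [ffun j => v (rshift m j)]).

Definition dsum_merge m n (z : {ffun 'I_m -> V} * {ffun 'I_n -> V}) :
    {ffun 'I_(m + n) -> V} :=
  [ffun k => match split k with inl i => z.1 i | inr j => z.2 j end].

Lemma dsum_split_linear m n : linear (@dsum_split m n).
Proof. by move=> a u v; congr (_, _); apply/ffunP=> i; rewrite !ffunE. Qed.

Lemma dsum_splitK m n : cancel (@dsum_split m n) (@dsum_merge m n).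
Proof.
move=> v; apply/ffunP=> k; rewrite ffunE -[in RHS](splitK k).
by case: (split k) => i; rewrite ffunE.
Qed.

Lemma dsum_mergeK m n : cancel (@dsum_merge m n) (@dsum_split m n).
Proof.
case=> v1 v2; congr (_, _); apply/ffunP=> i; rewrite !ffunE.
  by rewrite (unsplitK (inl _ i)).
by rewrite (unsplitK (inr _ i)).
Qed.

Lemma dsum_split_isometry m n :
  form_isometry (@dsum (m + n)) (pair_form (@dsum m) (@dsum n))
    (@dsum_split m n) (@dsum_merge m n).
Proof.
apply: exact_isometry;
  [exact: dsum_split_linear | exact: dsum_splitK | exact: dsum_mergeK |].
move=> v w; rewrite /pair_form /dsum_form [RHS]big_split_ord /=.
by congr (_ + _); apply: eq_bigr => i _; rewrite !ffunE.
Qed.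

Lemma dsum_split_isometric m n :
  isometric (@dsum (m + n)) (pair_form (@dsum m) (@dsum n)).
Proof. by exists (@dsum_split m n), (@dsum_merge m n); apply: dsum_split_isometry. Qed.

End DirectSums.

Definition hyperbolic_form n (x y : 'rV[F]_n * 'rV[F]_n) : F :=
  \sum_(j < n) sig (x.1 0 j) * y.2 0 j.

Section HyperbolicPairing.
Variables (W : vectType F) (Q : W -> W -> F).
Hypothesis sesqQ : sesqui_map sig Q.
Hypothesis ndQ : nondeg_form sig eps Q.

Local Notation om := (omega sig eps Q).
Local Notation n := (\dim {:W}).
Local Notation e := (vbasis {:W}).
Local Notation rVof := (passmx.rVof e).
Local Notation vecof := (passmx.vecof e).
Local Notation rVofK := (passmx.rVofK (vbasisP {:W})).
Local Notation vecofK := (passmx.vecofK (vbasisP {:W})).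

Lemma omega_sesqui : sesqui_map sig om.
Proof.
case: sesqQ => QZl QZr; split=> [a u v w|b u v w];
  by rewrite /omega ?QZl ?QZr ?rmorphD ?rmorphM ?sig_invol; ring.
Qed.

Lemma sesqui_rVof (f : W -> W -> F) : sesqui_map sig f ->
  forall u z, f u z = \sum_(j < n) sig (rVof u 0 j) * f e`_j z.
Proof. by move=> sesqf u z; rewrite -{1}(rVofK u) (sesqui_suml sesqf). Qed.

(* The Gram matrix of [om] in the basis [e], transposed so that it acts on coordinate rows. *)
Definition omega_gram : 'M[F]_n := \matrix_(i, j) om e`_j e`_i.

Lemma omega_gramE x j : (x *m omega_gram) 0 j = om e`_j (vecof x).
Proof.
rewrite mxE (sesqui_sumr omega_sesqui).
by apply: eq_bigr => i _; rewrite mxE mulrC.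
Qed.

Lemma omega_gram_unit : omega_gram \in unitmx.
Proof.
rewrite -row_free_unit; apply: inj_row_free => x xG0.
suff vx0 : vecof x = 0 by rewrite -[x]vecofK vx0; apply/rowP => j; rewrite !mxE linear0.
apply: ndQ => u; rewrite (sesqui_rVof omega_sesqui) big1 // => j _.
by rewrite -omega_gramE xG0 !mxE mulr0.
Qed.

Definition omega_rep (y : W) : W := vecof (\row_j Q e`_j y *m invmx omega_gram).

Lemma omega_repP x y : om x (omega_rep y) = Q x y.
Proof.
rewrite (sesqui_rVof omega_sesqui) [RHS](sesqui_rVof sesqQ); apply: eq_bigr => j _.
by rewrite -omega_gramE mulmxKV ?omega_gram_unit // !mxE.
Qed.

Lemma omega_rep_linear : linear omega_rep.
Proof.
move=> a y y'; rewrite /omega_rep -passmx.vecof_linear; congr vecof.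
rewrite scalemxAl -mulmxDl; congr (_ *m _).
by apply/rowP => j; rewrite !mxE (sesquiDr sesqQ) (sesquiZr sesqQ) mulrC.
Qed.

Definition omega_pairing (x y : W * W) : F := om x.1 y.2.

(* With [p := omega_rep], [Q (u + p v) (u' + p v') - Q (u + p v - v) (u' + p v' - v')]
   differs from [om u v'] by a form [f - eps f^*], which is null. *)
Definition pairing_to_sum (z : W * W) : W * W :=
  (z.1 + omega_rep z.2, z.1 + omega_rep z.2 - z.2).

Definition sum_to_pairing (z : W * W) : W * W :=
  (z.1 - omega_rep (z.1 - z.2), z.1 - z.2).

Lemma pairing_sum_isometry :
  form_isometry omega_pairing (pair_form Q (fun x y => - Q x y)) pairing_to_sum sum_to_pairing.
Proof.
split.
- move=> a [u1 u2] [v1 v2]; rewrite /pairing_to_sum !pairZ !pairD /= omega_rep_linear.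
  congr (_, _); first by rewrite scalerDr addrACA.
  by rewrite scalerBr scalerDr opprD [RHS]addrACA (addrACA (a *: u1)).
- by case=> u v; rewrite /pairing_to_sum /sum_to_pairing /= subKr addrK.
- by case=> u v; rewrite /pairing_to_sum /sum_to_pairing /= subrK opprB addrC subrK.
have := null_form_eps_adjoint (fun x x' : W * W => Q x.2 x'.1 + Q (omega_rep x.2) x'.2).
move/eq_null_form; apply=> -[u v] [u' v'].
rewrite /pair_form /omega_pairing /pairing_to_sum /=.
have e1 : Q v (omega_rep v') = Q v v' - eps * sig (Q (omega_rep v') v).
  by rewrite -(omega_repP v v') addrK.
rewrite !(sesquiDl sesqQ, sesquiBl sesqQ, sesquiDr sesqQ, sesquiBr sesqQ).
by rewrite !(sesquiNl sesqQ, sesquiNr sesqQ) e1 /omega !rmorphD; ring.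
Qed.

Definition pairing_coords (z : W * W) : 'rV[F]_n * 'rV[F]_n :=
  (rVof z.1, rVof z.2 *m omega_gram).

Definition coords_pairing (x : 'rV[F]_n * 'rV[F]_n) : W * W :=
  (vecof x.1, vecof (x.2 *m invmx omega_gram)).

Lemma pairing_hyperbolic_isometry :
  form_isometry omega_pairing (@hyperbolic_form n) pairing_coords coords_pairing.
Proof.
apply: exact_isometry.
- move=> a [u1 u2] [v1 v2]; rewrite /pairing_coords !pairZ !pairD /=.
  by rewrite !passmx.rVof_linear mulmxDl scalemxAl.
- by case=> u v; rewrite /coords_pairing /= mulmxK ?omega_gram_unit // !rVofK.
- by case=> x y; rewrite /pairing_coords /= !vecofK mulmxKV ?omega_gram_unit.
case=> u v [u' v']; rewrite /hyperbolic_form /omega_pairing /= (sesqui_rVof omega_sesqui).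
by apply: eq_bigr => j _; rewrite omega_gramE rVofK.
Qed.

Lemma sum_opp_isometric_hyperbolic m : n = m ->
  isometric (pair_form Q (fun x y => - Q x y)) (@hyperbolic_form m).
Proof.
move=> <-; apply: (@isometric_trans _ _ _ _ omega_pairing).
  by exists sum_to_pairing, pairing_to_sum; apply: isometry_sym pairing_sum_isometry.
by exists pairing_coords, coords_pairing; apply: pairing_hyperbolic_isometry.
Qed.

End HyperbolicPairing.

Lemma dim_ffun (V : vectType F) k : \dim {:{ffun 'I_k -> V}} = (k * \dim {:V})%N.
Proof. by rewrite !dimvf -[in RHS](card_ord k). Qed.

Section StablyHyperbolic.
Variables (V : vectType F) (q : V -> V -> F).
Hypotheses (sesq : sesqui_map sig q) (ndq : nondeg_form sig eps q).
Variables (a b : F).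
Hypothesis hab : sig a * a + sig b * b = -1.
Local Notation dsum := (dsum_form q).

Lemma dsum_double_isometric_opp m :
  isometric (@dsum (m + m)) (fun v w => - @dsum (m + m) v w).
Proof.
have split_iso := dsum_split_isometric q m m.
apply: (isometric_trans split_iso).
apply: (isometric_trans _ (isometric_opp (isometric_sym split_iso))).
exists (quat_map a b), (quat_map_inv a b).
exact: (quat_isometry (dsum_sesqui sesq m) hab).
Qed.

Lemma dsum_isometric_hyperbolic m n : ((m + m) * \dim {:V})%N = n ->
  isometric (@dsum ((m + m) + (m + m))) (@hyperbolic_form n).
Proof.
move=> dim_n; apply: isometric_trans (dsum_split_isometric q (m + m) (m + m)) _.
apply: isometric_trans (isometric_pair (isometric_refl _) (dsum_double_isometric_opp m)) _.
apply: (sum_opp_isometric_hyperbolic (dsum_sesqui sesq _) (dsum_nondeg (n := m + m) sesq ndq)).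
by rewrite dim_ffun.
Qed.

End StablyHyperbolic.

(* [inG q g] unfolds to [form_aut (dsum_form q) g]. *)
Definition form_aut (U : lmodType F) (f : U -> U -> F) (g : U -> U) :=
  is_linear g /\ bijective g /\ form_eq (fun v w => f (g v) (g w)) f.

Lemma form_aut_conj (U U' : lmodType F) f f' (S : U -> U') S' g :
  form_isometry f f' S S' -> form_aut f g -> form_aut f' (S \o g \o S').
Proof.
move=> [linS SK S'K Sf] [lin_g [[g' gK g'K] gf]]; split; last split.
- by move=> a u v /=; rewrite (linear_can2 linS SK S'K) lin_g linS.
- by exists (S \o g' \o S') => u /=; rewrite ?SK ?gK ?S'K ?g'K.
apply: (eq_null_form (null_formD (null_formD (null_form_comp (g \o S') Sf)
  (null_form_comp S' gf)) (null_formN (null_form_comp S' Sf)))).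
by move=> v w /=; rewrite !S'K; ring.
Qed.

Section StableGroup.
Variables (V : vectType F) (q : V -> V -> F).
Local Notation dsum := (dsum_form q).

Lemma dsum_restr n m (u w : {ffun 'I_m -> V}) : (n <= m)%N ->
  dsum u w = dsum (restr n u) (restr n w) + \sum_(n <= i < m) q (entry u i) (entry w i).
Proof.
move=> nm; rewrite !dsum_entry (big_cat_nat _ (n := n)) //=; congr (_ + _).
by apply: eq_big_nat => i /andP[_ ni]; rewrite !entry_restr ni.
Qed.

Lemma form_aut_ext n m (g : {ffun 'I_n -> V} -> {ffun 'I_n -> V}) :
  (n <= m)%N -> form_aut (@dsum n) g -> form_aut (@dsum m) (ext g).
Proof.
move=> nm [lin_g [[g' gK g'K] gf]]; split; last split.
- exact: ext_linear.
- by exists (ext g') => u; rewrite -ext_comp //; apply: ext_idfun => x /=.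
apply: (eq_null_form (null_form_comp (restr n) gf)) => v w /=.
rewrite (dsum_restr (ext g v) _ nm) (dsum_restr v w nm) !restr_ext //.
have -> : \sum_(n <= i < m) q (entry (ext g v) i) (entry (ext g w) i) =
          \sum_(n <= i < m) q (entry v i) (entry w i).
  by apply: eq_big_nat => i /andP[ni im]; rewrite !entry_ext im ltnNge ni.
by ring.
Qed.

Local Notation stab := (stab_rep sig eps Lam q).
Local Notation sm x := (@smap _ _ _ _ _ _ x).

Lemma stab_equiv_level (x y : stab) m : (maxn (level x) (level y) <= m)%N ->
  stab_equiv x y <-> (forall v : {ffun 'I_m -> V}, ext (sm x) v = ext (sm y) v).
Proof. by move=> le_m; apply: eq_ext_level; rewrite ?leq_maxl ?leq_maxr. Qed.

Lemma stab_mul_level (x y z : stab) m :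
  (maxn (level x) (maxn (level y) (level z)) <= m)%N ->
  stab_mul x y z <-> (forall v : {ffun 'I_m -> V}, ext (sm z) v = ext (sm x) (ext (sm y) v)).
Proof.
move=> le_m; apply: eq_ext_mul_level => //; rewrite ?leq_maxl //.
  exact: leq_trans (leq_maxl _ _) (leq_maxr _ _).
exact: leq_trans (leq_maxr _ _) (leq_maxr _ _).
Qed.

End StableGroup.

Section Transfer.
Variables (V1 V2 : vectType F) (q1 : V1 -> V1 -> F) (q2 : V2 -> V2 -> F).
Variables (A B : nat) (T : {ffun 'I_A -> V1} -> {ffun 'I_B -> V2}).
Variable T' : {ffun 'I_B -> V2} -> {ffun 'I_A -> V1}.
Hypotheses (A_gt0 : (0 < A)%N) (B_gt0 : (0 < B)%N).
Hypothesis isoT : form_isometry (@dsum_form _ _ q1 A) (@dsum_form _ _ q2 B) T T'.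

Local Notation stab1 := (stab_rep sig eps Lam q1).
Local Notation stab2 := (stab_rep sig eps Lam q2).
Local Notation sm x := (@smap _ _ _ _ _ _ x).

Lemma blockwise_isometry k :
  form_isometry (@dsum_form _ _ q1 (A * k)) (@dsum_form _ _ q2 (B * k))
    (blockwise T k) (blockwise T' k).
Proof.
case: isoT => linT TK T'K Tf; split.
- exact: blockwise_linear.
- exact: blockwiseK.
- exact: blockwiseK.
have blocks_null j := null_form_comp (@block F V1 A j (A * k)) Tf.
apply: (eq_null_form (null_form_sum (index_iota 0 k) blocks_null)).
move=> v w /=; rewrite (dsum_block q1 v w) (dsum_block q2 (blockwise T k v)) -sumrB big_mkord.
by apply: eq_bigr => j _; rewrite !block_blockwise.
Qed.

Lemma ext_conj_blockwise n0 n (h : {ffun 'I_(A * n0) -> V1} -> {ffun 'I_(A * n0) -> V1})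
    (v : {ffun 'I_(B * n) -> V2}) : (n0 <= n)%N ->
  ext (blockwise T n0 \o h \o blockwise T' n0) v = blockwise T n (ext h (blockwise T' n v)).
Proof.
case: isoT => _ _ T'K _ le_n.
have Bn : (B * n0 <= B * n)%N by nia.
have An : (A * n0 <= A * n)%N by nia.
apply: block_inj => j jn; rewrite block_blockwise //.
case: (ltnP j n0) => jn0; last first.
  by rewrite block_ext_high ?block_ext_high ?block_blockwise ?T'K //; nia.
rewrite block_ext_low ?block_ext_low //= ?block_blockwise //; try nia.
congr (T (block A j (h _))); apply: block_inj => j' jn'.
by rewrite block_restr ?block_blockwise ?block_restr //; nia.
Qed.

Definition transfer_map (x : stab1) :=
  blockwise T (level x) \o @ext F V1 (level x) (A * level x) (sm x) \o blockwise T' (level x).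

Arguments transfer_map : clear implicits.

Lemma transfer_mapP x : inG sig eps Lam q2 (transfer_map x).
Proof.
apply: (form_aut_conj (blockwise_isometry (level x))).
by apply: form_aut_ext (smapP x); rewrite leq_pmull.
Qed.

Definition transfer (x : stab1) : stab2 := StabRep (transfer_mapP x).

Lemma transfer_ext x n (v : {ffun 'I_(B * n) -> V2}) : (level x <= n)%N ->
  ext (sm (transfer x)) v = blockwise T n (@ext F V1 (level x) (A * n) (sm x) (blockwise T' n v)).
Proof.
move=> le_n; rewrite /= /transfer_map ext_conj_blockwise //; congr (blockwise T n _).
by apply: ext_ext; rewrite leq_pmull.
Qed.

Lemma transfer_equiv x y : stab_equiv x y <-> stab_equiv (transfer x) (transfer y).
Proof.
have [_ TK _ _] := isoT; set n := maxn (level x) (level y).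
have [xn yn] : (level x <= n)%N /\ (level y <= n)%N by rewrite leq_maxl leq_maxr.
rewrite (stab_equiv_level (m := A * n)) ?leq_pmull //.
rewrite (stab_equiv_level (m := B * n)) /=; last by rewrite /n; nia.
split=> xy v; first by rewrite !transfer_ext // xy.
apply: (can_inj (blockwiseK (k := n) TK)).
by have := xy (blockwise T n v); rewrite !transfer_ext // blockwiseK.
Qed.

Lemma transfer_surj y : exists x, stab_equiv (transfer x) y.
Proof.
have [_ TK T'K _] := isoT; set n := level y.
pose g := blockwise T' n \o @ext F V2 n (B * n) (sm y) \o blockwise T n.
have gP : inG sig eps Lam q1 g.
  apply: (form_aut_conj (isometry_sym (blockwise_isometry n))).
  by apply: form_aut_ext (smapP y); rewrite leq_pmull.
exists (StabRep gP); apply/(stab_equiv_level (m := B * (A * n))).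
  by rewrite /= geq_max leqnn mulnA leq_pmull // muln_gt0 A_gt0 B_gt0.
move=> v; rewrite transfer_ext //= -ext_conj_blockwise ?leq_pmull //.
rewrite -[RHS](ext_ext _ _ (k := B * n)) ?leq_pmull //.
by apply: eq_ext => u; rewrite /g /= !blockwiseK.
Qed.

Lemma transfer_mul x y z : stab_mul x y z -> stab_mul (transfer x) (transfer y) (transfer z).
Proof.
have [_ TK _ _] := isoT; set n := maxn (level x) (maxn (level y) (level z)).
have [xn yn zn] : [/\ (level x <= n)%N, (level y <= n)%N & (level z <= n)%N].
  by rewrite /n !leq_max !leqnn !orbT.
rewrite (stab_mul_level (m := A * n)) ?leq_pmull //.
rewrite (stab_mul_level (m := B * n)) /=; last by rewrite /n; nia.
by move=> xyz v; rewrite !transfer_ext // (blockwiseK TK) xyz.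
Qed.

End Transfer.

Theorem stab_iso_of_isometric (V1 V2 : vectType F) (q1 : V1 -> V1 -> F) (q2 : V2 -> V2 -> F) A B :
  (0 < A)%N -> (0 < B)%N -> isometric (@dsum_form _ _ q1 A) (@dsum_form _ _ q2 B) ->
  exists phi : stab_rep sig eps Lam q1 -> stab_rep sig eps Lam q2, stab_iso phi.
Proof.
move=> A_gt0 B_gt0 [T [T' isoT]]; exists (transfer A_gt0 isoT); split; last split.
- exact: transfer_equiv.
- exact: transfer_surj.
- exact: transfer_mul.
Qed.

End FormParameter.

Unset Implicit Arguments.

Theorem theorem7p6 (F : fieldType) (sig : {rmorphism F -> F})
  (sig_invol : forall x : F, sig (sig x) = x)
  (eps : F) (heps : eps * sig eps = 1)
  (Lam : {pred F})
  (Lam0 : 0 \in Lam) (LamB : forall x y, x \in Lam -> y \in Lam -> x - y \in Lam)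
  (Lam_min : forall c : F, c - eps * sig c \in Lam)
  (Lam_max : forall c : F, c \in Lam -> c + eps * sig c = 0)
  (hF : exists a b : F, sig a * a + sig b * b = -1)
  (V1 : vectType F) (q1 : V1 -> V1 -> F)
  (hq1 : sesqui_map sig q1) (nd1 : nondeg_form sig eps q1)
  (hV1 : (0 < \dim (fullv : {vspace V1}))%N)
  (V2 : vectType F) (q2 : V2 -> V2 -> F)
  (hq2 : sesqui_map sig q2) (nd2 : nondeg_form sig eps q2)
  (hV2 : (0 < \dim (fullv : {vspace V2}))%N) :
  exists phi : stab_rep sig eps Lam q1 -> stab_rep sig eps Lam q2,
    stab_iso phi.
Proof.
(* Only the lower bound [Lam_min] on [Lam] enters. *)
have [a [b hab]] := hF.
pose d1 := \dim {:V1}; pose d2 := \dim {:V2}.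
have iso1 := dsum_isometric_hyperbolic sig_invol heps Lam0 LamB Lam_min hq1 nd1 hab
  (erefl ((d2 + d2) * d1)%N).
have dims : ((d1 + d1) * d2 = (d2 + d2) * d1)%N by rewrite !mulnDl mulnC.
have iso2 := dsum_isometric_hyperbolic sig_invol heps Lam0 LamB Lam_min hq2 nd2 hab dims.
have iso12 := isometric_trans Lam0 LamB iso1 (isometric_sym Lam0 LamB iso2).
apply: (stab_iso_of_isometric Lam0 LamB _ _ iso12).
  by rewrite !addn_gt0 hV2.
by rewrite !addn_gt0 hV1.
Qed.
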